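(* For each $j\in\mathbb{Z}_{\geq0}$ let $(t_{j,n})_{n\ge1}$ be a sequence of nonnegative reals, and define $(s_{j,n})_{n\ge1}$ recursively by $s_{j,1}=t_{j,1}$ and $s_{j,n}=\sum_{i=0}^{j}s_{i,n-1}t_{j-i,n}$ for $n\ge2$. Suppose that for every $j\in\mathbb{Z}_{\ge0}$, \[ t_{j,n}=\frac{1}{j!\,n^j}\left(1-\frac1n\right)+O\!\left(\frac{1}{n^{j+2}}\right)\quad(n\to\infty). \] Then for every $j\in\mathbb{Z}_{\ge0}$, $s_{j,n}=O\!\left(n^{-1/(j+1)}\right)$ as $n\to\infty$.
   Context: Implied constants in $O(\cdot)$ may depend on $j$. *)

From Stdlib Require Import Reals Arith Lra Lia.
Open Scope R_scope.

(* s_{j,n}: defined for n >= 1; index n = 0 is a dummy value 0.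
   s j 1 = t j 1 ; s j (n+1) = sum_{i=0}^{j} s i n * t (j-i) (n+1)  for n >= 1. *)
Fixpoint sseq (t : nat -> nat -> R) (n : nat) (j : nat) : R :=
  match n with
  | O => 0
  | S O => t j 1%nat
  | S m => sum_f_R0 (fun i => sseq t m i * t (j - i)%nat n) j
  end.

Definition bigO (f g : nat -> R) : Prop :=
  exists C : R, exists N : nat, forall n : nat, (N <= n)%nat -> Rabs (f n) <= C * g n.

From Stdlib Require Import Reals Arith Lra Lia Psatz.
Open Scope R_scope.

(* Since t_{0,n} = 1 - 1/n + O(1/n^2) and t_{k,n} = O(1/n) for k >= 1, the recurrence reads
   s_{j,n+1} <= (1 - 1/(n+1) + c/(n+1)^2) s_{j,n} + (1/(n+1)) sum_{i<j} O(s_{i,n}).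
   For j = 0 there is no forcing term and K (1 - c/n)/n is a supersolution, so s_{0,n} = O(1/n).
   For j >= 1, if every s_{i,n} with i < j is O(n^{-1/2}), the forcing term is O(n^{-3/2}) and
   K/sqrt n is a supersolution for K large, so by strong induction s_{j,n} = O(n^{-1/2}); this
   is stronger than the claimed O(n^{-1/(j+1)}). *)

Definition eventually_le (f g : nat -> R) : Prop :=
  exists C N, 0 <= C /\ forall n, (N <= n)%nat -> f n <= C * g n.

Lemma eventually_le_trans (f g h : nat -> R) :
  eventually_le f g -> (forall n, (1 <= n)%nat -> g n <= h n) -> eventually_le f h.
Proof.
  intros [C [N [HC H]]] Hgh. exists C, (Nat.max N 1). split; [exact HC|].
  intros n Hn. apply Rle_trans with (C * g n); [apply H; lia|].
  apply Rmult_le_compat_l; [exact HC | apply Hgh; lia].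
Qed.

Lemma eventually_le_shift (f g : nat -> R) :
  eventually_le f g -> eventually_le (fun n => f (S n)) (fun n => g (S n)).
Proof. intros [C [N [HC H]]]. exists C, N. split; [exact HC|]. intros n Hn. apply H; lia. Qed.

Lemma eventually_le_mult (f1 g1 f2 g2 : nat -> R) :
  (forall n, 0 <= f1 n) -> (forall n, 0 <= f2 n) ->
  eventually_le f1 g1 -> eventually_le f2 g2 ->
  eventually_le (fun n => f1 n * f2 n) (fun n => g1 n * g2 n).
Proof.
  intros Hf1 Hf2 [C1 [N1 [HC1 H1]]] [C2 [N2 [HC2 H2]]].
  exists (C1 * C2), (Nat.max N1 N2). split; [nra|]. intros n Hn.
  replace (C1 * C2 * (g1 n * g2 n)) with (C1 * g1 n * (C2 * g2 n)) by ring.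
  apply Rmult_le_compat; [apply Hf1 | apply Hf2 | apply H1; lia | apply H2; lia].
Qed.

Lemma eventually_le_sum (f : nat -> nat -> R) (g : nat -> R) (m : nat) :
  (forall i, (i <= m)%nat -> eventually_le (f i) g) ->
  eventually_le (fun n => sum_f_R0 (fun i => f i n) m) g.
Proof.
  induction m as [|m IH]; intros Hf; [exact (Hf 0%nat (le_n 0))|].
  destruct (IH (fun i Hi => Hf i (le_S _ _ Hi))) as [C1 [N1 [HC1 H1]]].
  destruct (Hf (S m) (le_n _)) as [C2 [N2 [HC2 H2]]].
  exists (C1 + C2), (Nat.max N1 N2). split; [lra|]. intros n Hn. rewrite tech5.
  specialize (H1 n ltac:(lia)). specialize (H2 n ltac:(lia)).
  rewrite Rmult_plus_distr_r. lra.
Qed.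

Lemma bigO_of_eventually_le (f g : nat -> R) :
  (forall n, 0 <= f n) -> eventually_le f g -> bigO f g.
Proof.
  intros Hf [C [N [_ H]]]. exists C, N. intros n Hn.
  rewrite Rabs_right by (apply Rle_ge, Hf). apply H, Hn.
Qed.

Lemma le_supersolution (a b q e : nat -> R) (N : nat) :
  (forall n, (N <= n)%nat -> 0 <= q n) ->
  (forall n, (N <= n)%nat -> a (S n) <= a n * q n + e n) ->
  (forall n, (N <= n)%nat -> b n * q n + e n <= b (S n)) ->
  a N <= b N -> forall n, (N <= n)%nat -> a n <= b n.
Proof.
  intros Hq Ha Hb HN n Hn. induction Hn as [|n Hn IH]; [exact HN|].
  specialize (Hq n Hn). specialize (Ha n Hn). specialize (Hb n Hn).
  assert (a n * q n <= b n * q n) by (apply Rmult_le_compat_r; assumption). lra.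
Qed.

Lemma harmonic_supersolution_step (x c K : R) : 0 < x -> 0 <= K ->
  K * (1 - c / x) / x * (1 - / (x + 1) + c / (x + 1) ^ 2)
    <= K * (1 - c / (x + 1)) / (x + 1).
Proof.
  intros Hx HK.
  assert (Hgap : K * (1 - c / (x + 1)) / (x + 1)
      - K * (1 - c / x) / x * (1 - / (x + 1) + c / (x + 1) ^ 2)
      = K * (c * c) / (x ^ 2 * (x + 1) ^ 2)) by (field; lra).
  assert (0 <= K * (c * c) / (x ^ 2 * (x + 1) ^ 2)).
  { apply Rmult_le_pos; [nra|].
    apply Rlt_le, Rinv_0_lt_compat, Rmult_lt_0_compat; apply pow_lt; lra. }
  lra.
Qed.

Lemma inv_sqrt_supersolution_step (x c E K : R) :
  1 <= x -> 8 * c <= x + 1 -> 0 <= c -> 0 <= E -> 8 * E <= K ->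
  K / sqrt x * (1 - / (x + 1) + c / (x + 1) ^ 2) + E * (/ sqrt x * / (x + 1))
    <= K / sqrt (x + 1).
Proof.
  intros Hx Hc Hc0 HE HK.
  pose proof (sqrt_lt_R0 x ltac:(lra)) as Hu.
  pose proof (sqrt_lt_R0 (x + 1) ltac:(lra)) as Hv.
  pose proof (sqrt_sqrt x ltac:(lra)) as Hu2.
  pose proof (sqrt_sqrt (x + 1) ltac:(lra)) as Hv2.
  set (y := / (x + 1)).
  set (s := sqrt x / sqrt (x + 1)).
  assert (Hy : 0 < y <= / 2)
    by (split; [apply Rinv_0_lt_compat | apply Rinv_le_contravar]; lra).
  assert (Hxy : (x + 1) * y = 1) by (unfold y; field; lra).
  assert (Hs2 : s * s = 1 - y).
  { unfold s, y.
    replace (sqrt x / sqrt (x + 1) * (sqrt x / sqrt (x + 1)))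
      with (sqrt x * sqrt x / (sqrt (x + 1) * sqrt (x + 1))) by (field; lra).
    rewrite Hu2, Hv2. field. lra. }
  assert (Hs : 1 - 3 / 4 * y <= s).
  { assert (0 <= s) by (unfold s; apply Rlt_le, Rdiv_lt_0_compat; lra). nra. }
  assert (Hcy : c * y <= / 8) by nra.
  (* with E <= K/8 and c y <= 1/8 the left side is at most K (1 - 3y/4) <= K sqrt(1 - y) *)
  assert (Hkey : K * (1 - y + c * y * y) + E * y <= K * s).
  { assert (K * (1 - 3 / 4 * y) <= K * s) by (apply Rmult_le_compat_l; lra).
    assert (E * y <= K / 8 * y) by (apply Rmult_le_compat_r; lra).
    assert (K * y * (c * y) <= K * y * / 8) by (apply Rmult_le_compat_l; nra).
    nra. }
  replace (K / sqrt x * (1 - y + c / (x + 1) ^ 2) + E * (/ sqrt x * y))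
    with ((K * (1 - y + c * y * y) + E * y) / sqrt x) by (unfold y; field; lra).
  replace (K / sqrt (x + 1)) with (K * s / sqrt x) by (unfold s; field; lra).
  apply Rmult_le_compat_r; [apply Rlt_le, Rinv_0_lt_compat; lra | exact Hkey].
Qed.

Lemma inv_le_inv_sqrt (x : R) : 1 <= x -> / x <= / sqrt x.
Proof.
  intros Hx. pose proof (sqrt_lt_R0 x ltac:(lra)). pose proof (sqrt_sqrt x ltac:(lra)).
  apply Rinv_le_contravar; nra.
Qed.

Lemma inv_sqrt_le_Rpower (x p : R) : 1 <= x -> p <= / 2 -> / sqrt x <= Rpower x (- p).
Proof.
  intros Hx Hp. rewrite <- Rpower_sqrt, <- Rpower_Ropp by lra.
  apply Rle_Rpower; lra.
Qed.

Section Recurrence.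
Variable t : nat -> nat -> R.
Hypothesis t_nonneg : forall j n : nat, (1 <= n)%nat -> 0 <= t j n.
Hypothesis t_asym : forall j : nat,
  bigO (fun n => t j n - / (INR (fact j) * INR n ^ j) * (1 - / INR n))
       (fun n => / INR n ^ (j + 2)).

Lemma sseq_succ_0 (n : nat) : (1 <= n)%nat -> sseq t (S n) 0 = sseq t n 0 * t 0%nat (S n).
Proof. intros Hn. destruct n as [|n]; [lia | reflexivity]. Qed.

Lemma sseq_succ (n j : nat) : (1 <= n)%nat ->
  sseq t (S n) (S j) = sum_f_R0 (fun i => sseq t n i * t (S j - i)%nat (S n)) j
                       + sseq t n (S j) * t 0%nat (S n).
Proof.
  intros Hn. destruct n as [|n]; [lia|].
  change (sseq t (S (S n)) (S j))
    with (sum_f_R0 (fun i => sseq t (S n) i * t (S j - i)%nat (S (S n))) (S j)).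
  rewrite tech5. cbv beta. rewrite Nat.sub_diag. reflexivity.
Qed.

Lemma sseq_nonneg (n j : nat) : 0 <= sseq t n j.
Proof.
  revert j. induction n as [|n IH]; intros j; [apply Rle_refl|].
  destruct n as [|n]; [apply t_nonneg; lia|].
  apply cond_pos_sum. intros i. apply Rmult_le_pos; [apply IH | apply t_nonneg; lia].
Qed.

Lemma t_le_eventually (j : nat) : exists c N, 0 <= c /\ forall n, (N <= n)%nat ->
  t j n <= / (INR (fact j) * INR n ^ j) * (1 - / INR n) + c * / INR n ^ (j + 2).
Proof.
  destruct (t_asym j) as [C [N H]]. exists (Rabs C), (Nat.max N 1).
  split; [apply Rabs_pos|]. intros n Hn. specialize (H n ltac:(lia)). cbv beta in H.
  assert (0 <= / INR n ^ (j + 2))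
    by (apply Rlt_le, Rinv_0_lt_compat, pow_lt, lt_0_INR; lia).
  pose proof (Rle_abs (t j n - / (INR (fact j) * INR n ^ j) * (1 - / INR n))).
  assert (C * / INR n ^ (j + 2) <= Rabs C * / INR n ^ (j + 2))
    by (apply Rmult_le_compat_r; [assumption | apply Rle_abs]).
  lra.
Qed.

Lemma t0_le_eventually : exists c N, 0 <= c /\ forall n, (N <= n)%nat ->
  t 0%nat n <= 1 - / INR n + c / INR n ^ 2.
Proof.
  destruct (t_le_eventually 0) as [c [N [Hc H]]]. exists c, N. split; [exact Hc|].
  intros n Hn. specialize (H n Hn).
  change (/ (INR (fact 0) * INR n ^ 0)) with (/ (1 * 1)) in H.
  rewrite Rmult_1_l, Rinv_1, Rmult_1_l in H. exact H.
Qed.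

Lemma t_succ_eventually_le (k : nat) : eventually_le (t (S k)) (fun n => / INR n).
Proof.
  destruct (t_le_eventually (S k)) as [c [N [Hc H]]].
  exists (1 + c), (Nat.max N 1). split; [lra|]. intros n Hn. specialize (H n ltac:(lia)).
  assert (Hx : 1 <= INR n) by (apply (le_INR 1); lia).
  assert (Hfact : 1 <= INR (fact (S k))) by (apply (le_INR 1), lt_O_fact).
  assert (Hpow : forall m, (1 <= m)%nat -> INR n <= INR n ^ m).
  { intros m Hm. rewrite <- (pow_1 (INR n)) at 1. apply Rle_pow; assumption. }
  assert (Hmain : / (INR (fact (S k)) * INR n ^ S k) <= / INR n).
  { pose proof (Hpow (S k) ltac:(lia)). apply Rinv_le_contravar; nra. }
  assert (Hrem : / INR n ^ (S k + 2) <= / INR n)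
    by (apply Rinv_le_contravar; [lra | apply Hpow; lia]).
  assert (0 < / INR n <= 1)
    by (split; [apply Rinv_0_lt_compat | rewrite <- Rinv_1; apply Rinv_le_contravar]; lra).
  assert (0 <= / (INR (fact (S k)) * INR n ^ S k))
    by (apply Rlt_le, Rinv_0_lt_compat, Rmult_lt_0_compat; [lra | apply pow_lt; lra]).
  nra.
Qed.

Lemma sseq_0_eventually_le : eventually_le (fun n => sseq t n 0) (fun n => / INR n).
Proof.
  destruct t0_le_eventually as [c [N0 [Hc Ht0]]].
  destruct (INR_unbounded (2 * c)) as [N1 HN1].
  set (N := Nat.max (Nat.max N0 N1) 1).
  assert (HN : 2 * c <= INR N /\ 1 <= INR N).
  { split; [apply Rle_trans with (INR N1); [lra | apply le_INR; lia] | apply (le_INR 1); lia]. }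
  set (K := 2 * INR N * sseq t N 0).
  assert (HK : 0 <= K) by (pose proof (sseq_nonneg N 0); unfold K; nra).
  assert (Hx : forall n, (N <= n)%nat -> INR N <= INR n) by (intros; apply le_INR; lia).
  assert (Hcn : forall n, (N <= n)%nat -> 0 <= c / INR n <= / 2).
  { intros n Hn. pose proof (Hx n Hn).
    split; [apply Rmult_le_pos; [lra | apply Rlt_le, Rinv_0_lt_compat; lra]|].
    apply Rmult_le_reg_r with (INR n); [lra|].
    unfold Rdiv. rewrite Rmult_assoc, Rinv_l; lra. }
  set (b := fun n => K * (1 - c / INR n) / INR n).
  assert (Hb : forall n, (N <= n)%nat -> 0 <= b n).
  { intros n Hn. pose proof (Hx n Hn). pose proof (Hcn n Hn). unfold b.
    apply Rmult_le_pos; [nra | apply Rlt_le, Rinv_0_lt_compat; lra]. }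
  assert (Hcomp : forall n, (N <= n)%nat -> sseq t n 0 <= b n).
  { apply (le_supersolution (fun n => sseq t n 0) b (fun n => t 0%nat (S n)) (fun _ => 0) N);
      cbv beta; [intros m Hm; apply t_nonneg; lia | | |].
    + intros m Hm. rewrite sseq_succ_0 by lia. lra.
    + intros m Hm. rewrite Rplus_0_r.
      apply Rle_trans with (b m * (1 - / INR (S m) + c / INR (S m) ^ 2)).
      * apply Rmult_le_compat_l; [apply Hb, Hm | apply Ht0; lia].
      * unfold b. rewrite S_INR. apply harmonic_supersolution_step; [pose proof (Hx m Hm); lra | exact HK].
    + pose proof (Hcn N (le_n N)). pose proof (sseq_nonneg N 0). unfold b, K.
      replace (2 * INR N * sseq t N 0 * (1 - c / INR N) / INR N)
        with (2 * sseq t N 0 * (1 - c / INR N)) by (field; lra).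
      nra. }
  exists K, N. split; [exact HK|]. intros n Hn.
  apply Rle_trans with (b n); [apply Hcomp, Hn|].
  pose proof (Hx n Hn). pose proof (Hcn n Hn). unfold b, Rdiv.
  apply Rmult_le_compat_r; [apply Rlt_le, Rinv_0_lt_compat; lra | nra].
Qed.

Lemma forcing_eventually_le (j : nat) :
  (forall i, (i <= j)%nat -> eventually_le (fun n => sseq t n i) (fun n => / sqrt (INR n))) ->
  eventually_le (fun n => sum_f_R0 (fun i => sseq t n i * t (S j - i)%nat (S n)) j)
                (fun n => / sqrt (INR n) * / INR (S n)).
Proof.
  intros IH. apply (eventually_le_sum (fun i n => sseq t n i * t (S j - i)%nat (S n))).
  intros i Hi. replace (S j - i)%nat with (S (j - i)) by lia.
  apply eventually_le_mult.
  - intros n. apply sseq_nonneg.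
  - intros n. apply t_nonneg. lia.
  - apply IH, Hi.
  - apply (eventually_le_shift (t (S (j - i))) (fun n => / INR n)), t_succ_eventually_le.
Qed.

Lemma sseq_succ_eventually_le (j : nat) :
  (forall i, (i <= j)%nat -> eventually_le (fun n => sseq t n i) (fun n => / sqrt (INR n))) ->
  eventually_le (fun n => sseq t n (S j)) (fun n => / sqrt (INR n)).
Proof.
  intros IH.
  destruct t0_le_eventually as [c [N0 [Hc Ht0]]].
  destruct (forcing_eventually_le j IH) as [E [N1 [HE Hforce]]].
  destruct (INR_unbounded (8 * c)) as [N2 HN2].
  set (N := Nat.max (Nat.max N0 N1) (Nat.max N2 1)).
  assert (Hx : forall n, (N <= n)%nat -> 8 * c <= INR n /\ 1 <= INR n).
  { intros n Hn.
    split; [apply Rle_trans with (INR N2); [lra | apply le_INR; lia] | apply (le_INR 1); lia]. }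
  pose proof (sqrt_lt_R0 (INR N) ltac:(destruct (Hx N (le_n N)); lra)) as HsN.
  pose proof (sseq_nonneg N (S j)) as Ha.
  set (K := 8 * E + sseq t N (S j) * sqrt (INR N)).
  assert (HK : 8 * E <= K) by (unfold K; nra).
  exists K, N. split; [lra|].
  apply (le_supersolution (fun n => sseq t n (S j)) (fun n => K / sqrt (INR n))
           (fun n => t 0%nat (S n)) (fun n => E * (/ sqrt (INR n) * / INR (S n))) N);
    cbv beta; [intros n Hn; apply t_nonneg; lia | | |].
  - intros n Hn. rewrite sseq_succ by lia.
    specialize (Hforce n ltac:(lia)). lra.
  - intros n Hn. destruct (Hx n Hn) as [H8 H1].
    pose proof (sqrt_lt_R0 (INR n) ltac:(lra)).
    apply Rle_trans with
      (K / sqrt (INR n) * (1 - / INR (S n) + c / INR (S n) ^ 2)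
       + E * (/ sqrt (INR n) * / INR (S n))).
    + apply Rplus_le_compat_r, Rmult_le_compat_l; [|apply Ht0; lia].
      apply Rmult_le_pos; [lra | apply Rlt_le, Rinv_0_lt_compat; lra].
    + rewrite S_INR. apply inv_sqrt_supersolution_step; lra.
  - replace (sseq t N (S j)) with (sseq t N (S j) * sqrt (INR N) / sqrt (INR N)) by (field; lra).
    unfold Rdiv. apply Rmult_le_compat_r; [apply Rlt_le, Rinv_0_lt_compat; lra|].
    unfold K. lra.
Qed.

Lemma sseq_eventually_le_inv_sqrt (j : nat) :
  eventually_le (fun n => sseq t n j) (fun n => / sqrt (INR n)).
Proof.
  induction j as [j IH] using lt_wf_ind. destruct j as [|j].
  - apply (eventually_le_trans _ _ _ sseq_0_eventually_le).
    intros n Hn. apply inv_le_inv_sqrt, (le_INR 1), Hn.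
  - apply sseq_succ_eventually_le. intros i Hi. apply IH. lia.
Qed.

End Recurrence.

Theorem mainTheorem10 (t : nat -> nat -> R)
  (t_nonneg : forall j n : nat, (1 <= n)%nat -> 0 <= t j n)
  (t_asym : forall j : nat,
     bigO (fun n => t j n - / (INR (fact j) * INR n ^ j) * (1 - / INR n))
          (fun n => / INR n ^ (j + 2)))
  : forall j : nat, bigO (fun n => sseq t n j) (fun n => Rpower (INR n) (- (/ INR (j + 1)))).
Proof.
  intros j. apply bigO_of_eventually_le; [intros n; apply sseq_nonneg, t_nonneg|].
  destruct j as [|j].
  - apply (eventually_le_trans _ _ _ (sseq_0_eventually_le t t_nonneg t_asym)).
    intros n Hn. assert (1 <= INR n) by (apply (le_INR 1), Hn).
    change (INR (0 + 1)) with 1. rewrite Rinv_1, Rpower_Ropp, Rpower_1 by lra. apply Rle_refl.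
  - apply (eventually_le_trans _ _ _ (sseq_eventually_le_inv_sqrt t t_nonneg t_asym (S j))).
    intros n Hn. apply inv_sqrt_le_Rpower; [apply (le_INR 1), Hn|].
    apply Rinv_le_contravar; [lra | apply (le_INR 2); lia].
Qed.
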